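(* Let $(\mathbb S,+,\cdot)$ be a Commutative S-Structure which is Wheel Distributive and satisfies $0\in\mathbb S_0$. Then $(\mathbb S,+,\cdot)$ is Coordinated.
   Context: An S-Structure is a triple $(\mathbb S,+,\cdot)$ where $\mathbb S$ is a set and $+,\cdot$ are binary operations on $\mathbb S$ such that: $(\mathbb S,+)$ is a commutative group with identity $0$ (the inverse of $s$ is written $-s$, and $s-t:=s+(-t)$); $\mathbb S$ is closed under $\cdot$; and there exists $s\in\mathbb S$ with $0\cdot s\neq 0$ or $s\cdot 0\neq 0$. Multiplication binds tighter than addition. It is Commutative if $s\cdot t=t\cdot s$ for all $s,t\in\mathbb S$. For a Commutative S-Structure and $\alpha\in\mathbb S$, put $\mathbb S_\alpha=\{s\in\mathbb S:0\cdot s=s\cdot 0=\alpha\}$ and $\Lambda=\{\alpha\in\mathbb S:\mathbb S_\alpha\neq\emptyset\}$. The structure is Wheel Distributive if $s\cdot(t+r)+(s\cdot 0)=(s\cdot t)+(s\cdot r)$ for all $s,t,r\in\mathbb S$. If $\mathbb S_0\neq\emptyset$ and $\alpha\in\Lambda$, an element $q\in\mathbb S_\alpha$ is a Base for $\mathbb S_\alpha$ if (1) $q+\beta\in\mathbb S_\alpha$ for every $\beta\in\mathbb S_0$, and (2) every $s\in\mathbb S_\alpha$ can be written $s=q+\beta$ for some $\beta\in\mathbb S_0$. The structure is Coordinated if $\mathbb S_0\neq\emptyset$ and for every $\alpha\in\Lambda$ there exists a Base for $\mathbb S_\alpha$. *)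

Record SStructure {S : Type} (add mul : S -> S -> S) (zero : S) (opp : S -> S)
  : Prop := {
  ss_addA : forall a b c, add a (add b c) = add (add a b) c;
  ss_addC : forall a b, add a b = add b a;
  ss_add0 : forall a, add zero a = a;
  ss_addN : forall a, add (opp a) a = zero;
  ss_nontriv : exists s, mul zero s <> zero \/ mul s zero <> zero
}.

Definition Commutative {S : Type} (mul : S -> S -> S) : Prop :=
  forall s t, mul s t = mul t s.

Definition S_at {S : Type} (mul : S -> S -> S) (zero alpha s : S) : Prop :=
  mul zero s = alpha /\ mul s zero = alpha.

Definition Lambda {S : Type} (mul : S -> S -> S) (zero alpha : S) : Prop :=
  exists s, S_at mul zero alpha s.

Definition WheelDistributive {S : Type} (add mul : S -> S -> S) (zero : S)
  : Prop :=
  forall s t r, add (mul s (add t r)) (mul s zero) = add (mul s t) (mul s r).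

Definition IsBase {S : Type} (add mul : S -> S -> S) (zero alpha q : S)
  : Prop :=
  S_at mul zero alpha q /\
  (forall beta, S_at mul zero zero beta -> S_at mul zero alpha (add q beta)) /\
  (forall s, S_at mul zero alpha s ->
     exists beta, S_at mul zero zero beta /\ s = add q beta).

Definition Coordinated {S : Type} (add mul : S -> S -> S) (zero : S) : Prop :=
  (exists s, S_at mul zero zero s) /\
  (forall alpha, Lambda mul zero alpha -> exists q, IsBase add mul zero alpha q).


(* With [s = 0] and [0.0 = 0], wheel distributivity says that [z |-> 0.z] is a
   homomorphism of the additive group.  By commutativity [S_alpha] is its fibre
   over [alpha] and [S_0] its kernel, so every nonempty [S_alpha] is a coset of
   [S_0] and any of its elements is a Base. *)

Section CommutativeWheel.

Variables (S : Type) (add mul : S -> S -> S) (zero : S) (opp : S -> S).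
Hypothesis hS : SStructure add mul zero opp.
Hypothesis mulC : Commutative mul.
Hypothesis hwd : WheelDistributive add mul zero.
Hypothesis mul00 : mul zero zero = zero.

Lemma addr0 (a : S) : add a zero = a.
Proof. rewrite (ss_addC _ _ _ _ hS). apply (ss_add0 _ _ _ _ hS). Qed.

Lemma addrN (a : S) : add a (opp a) = zero.
Proof. rewrite (ss_addC _ _ _ _ hS). apply (ss_addN _ _ _ _ hS). Qed.

Lemma mul0D (t r : S) : mul zero (add t r) = add (mul zero t) (mul zero r).
Proof. rewrite <- hwd, mul00, addr0. reflexivity. Qed.

Lemma mul0_subr_eq0 (s t : S) :
  mul zero s = mul zero t -> mul zero (add s (opp t)) = zero.
Proof. intros e. rewrite mul0D, e, <- mul0D, addrN. exact mul00. Qed.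

Lemma S_atE (alpha s : S) : S_at mul zero alpha s <-> mul zero s = alpha.
Proof.
  split.
  - intros [e _]. exact e.
  - intros e. split; [exact e | rewrite mulC; exact e].
Qed.

Lemma IsBase_of_S_at (alpha q : S) :
  S_at mul zero alpha q -> IsBase add mul zero alpha q.
Proof.
  intros hq. apply S_atE in hq as hq0. split; [exact hq | split].
  - intros beta hbeta%S_atE. apply S_atE.
    rewrite mul0D, hq0, hbeta. apply addr0.
  - intros s hs%S_atE. exists (add s (opp q)). split.
    + apply S_atE, mul0_subr_eq0. rewrite hs, hq0. reflexivity.
    + rewrite (ss_addC _ _ _ _ hS s), (ss_addA _ _ _ _ hS), addrN.
      symmetry. apply (ss_add0 _ _ _ _ hS).
Qed.

End CommutativeWheel.

Theorem theorem2p4p1 (S : Type) (add mul : S -> S -> S) (zero : S)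
  (opp : S -> S) :
  SStructure add mul zero opp ->
  Commutative mul ->
  WheelDistributive add mul zero ->
  S_at mul zero zero zero ->
  Coordinated add mul zero.
Proof.
  intros hS mulC hwd h0.
  split.
  - exists zero. exact h0.
  - intros alpha [q hq]. exists q.
    exact (IsBase_of_S_at _ _ _ _ _ hS mulC hwd (proj1 h0) alpha q hq).
Qed.
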